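(* Let $g:\{0,1\}^n\to\{0,1\}$ be odd, and for $k\ge 3$ let $G_k=g^{\otimes\binom k2}$ denote the GSWF on $n$ voters and $k$ alternatives with $G_k^{a,b}(x)=g(x^{a,b})$ for all $a\ne b$. Then \[ GCW(G_4)=2\,GCW(G_3)-1, \] and \[ GCW(G_5)=\frac{GCW(G_6)}{3}+\frac{5\,GCW(G_3)}{3}-1. \]
   Context: $g$ odd means $g(1-y_1,\dots,1-y_n)=1-g(y)$. Profiles $x\in(L_k)^n$ are uniform random, $L_k$ the linear orders on $k$ alternatives; $x^{a,b}_i=1$ iff voter $i$ ranks $a$ above $b$. An alternative $a$ is a generalized Condorcet winner (GCW) of $G_k$ at $x$ if $G_k^{a,b}(x)=1$ for all $b\ne a$; $GCW(G_k)=\Pr_x[G_k$ has a GCW at $x]$. *)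

From mathcomp Require Import all_boot all_order all_algebra all_fingroup.
Set Implicit Arguments. Unset Strict Implicit. Unset Printing Implicit Defensive.

(* Binary vectors {0,1}^n with 0 = false, 1 = true. *)
Definition bvec (n : nat) := {ffun 'I_n -> bool}.

Definition odd_fun (n : nat) (g : bvec n -> bool) : Prop :=
  forall y : bvec n, g [ffun i => ~~ y i] = ~~ g y.

(* A linear order on k alternatives 'I_k is encoded by a permutation
   s : 'S_k, where s a is the position of alternative a (position 0 = top). This is a bijection 'S_k ~ L_k. *)
Definition above (k : nat) (s : 'S_k) (a b : 'I_k) : bool := (s a < s b)%N.

Definition profile (n k : nat) := {ffun 'I_n -> 'S_k}.

Definition pairvec (n k : nat) (x : profile n k) (a b : 'I_k) : bvec n :=
  [ffun i => above (x i) a b].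

Definition Gk (n k : nat) (g : bvec n -> bool) (x : profile n k) (a b : 'I_k) : bool :=
  g (pairvec x a b).

Definition is_GCW (n k : nat) (g : bvec n -> bool) (x : profile n k) (a : 'I_k) : bool :=
  [forall b : 'I_k, (b != a) ==> Gk g x a b].

Definition GCW (n k : nat) (g : bvec n -> bool) : rat :=
  (#|[set x : profile n k | [exists a : 'I_k, is_GCW g x a]]|%:R
     / #|{: profile n k}|%:R)%R.

From mathcomp Require Import all_boot all_order all_algebra all_fingroup.
From mathcomp Require Import zify lra.
Set Implicit Arguments. Unset Strict Implicit. Unset Printing Implicit Defensive.

(* Fix an odd g and write D for the number of alternatives beaten by
   alternative 0 in G_{k+1} at a uniform profile.  Two facts drive the proof:
   - falling moments: E[D^_j] = k^_j * p_j, where p_j is the probability that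
     alternative 0 is the GCW of G_{j+1}; an injective j-tuple beaten by 0,
     together with 0, spans a uniform sub-profile on j+1 alternatives
     (marginalisation of uniform linear orders);
   - symmetry: reversing all voters' orders maps D to k - D, by oddness of g.
   Hence any two polynomials P, Q with P(d) + P(k-d) = Q(d) + Q(k-d) on
   0..k give a linear relation between the p_j.  Since at most one GCW exists,
   GCW(G_k) = k * p_{k-1}; the relations for k = 3 and k = 5 are the two
   claimed identities. *)

Lemma card_indicator_sum (T : finType) (A : {pred T}) :
  #|A| = \sum_x (x \in A : nat).
Proof. by rewrite -sum1_card big_mkcond; apply: eq_bigr => x _; case: (x \in A). Qed.

Lemma double_count (T U : finType) (R : T -> U -> bool) :
  \sum_x #|[set u | R x u]| = \sum_u #|[set x | R x u]|.
Proof.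
under eq_bigr => x _ do rewrite card_indicator_sum.
rewrite exchange_big; apply: eq_bigr => u _; rewrite card_indicator_sum.
by apply: eq_bigr => x _; rewrite !inE.
Qed.

Lemma card_exists_unique (T I : finType) (P : T -> I -> bool) :
  (forall x a b, P x a -> P x b -> a = b) ->
  #|[set x | [exists a, P x a]]| = \sum_a #|[set x | P x a]|.
Proof.
move=> P_unique; rewrite -double_count card_indicator_sum; apply: eq_bigr => x _.
rewrite card_indicator_sum inE; case: existsP => [[a Pa]|noP].
  rewrite (bigD1 a) //= inE Pa big1 // => b ne_ba; rewrite inE.
  by case Pb: (P x b) => //; move: ne_ba; rewrite (P_unique _ _ _ Pb Pa) eqxx.
by rewrite big1 // => a _; rewrite inE; case Pa: (P x a) => //; case: noP; exists a.
Qed.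

(* For an injection e : 'I_m -> 'I_k, the
   order s on k alternatives induces an order on the m alternatives e i; the
   fibres of this restriction map all have k!/m! elements, so restricting a
   uniformly random profile yields a uniformly random profile. *)
Section Restriction.
Variables (k m : nat) (e : 'I_m -> 'I_k).
Hypothesis e_inj : injective e.

Definition restr_rank (s : 'S_k) (i : 'I_m) : nat :=
  #|[set j | s (e j) < s (e i)]|.

(* Fewer than m alternatives precede i, since i does not precede itself. *)
Lemma restr_rank_lt s i : restr_rank s i < m.
Proof.
rewrite /restr_rank -[X in _ < X]card_ord; apply: proper_card.
by apply/properP; split; [apply/subsetP | exists i; rewrite ?inE ?ltnn].
Qed.

Lemma restr_rank_ltE s i j :
  (restr_rank s i < restr_rank s j) = (s (e i) < s (e j)).
Proof.
have rank_mono i' j' : s (e i') < s (e j') -> restr_rank s i' < restr_rank s j'.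
  move=> lt_ij; apply: proper_card; apply/properP; split.
    by apply/subsetP => l; rewrite !inE => /ltn_trans; apply.
  by exists i'; rewrite !inE ?ltnn.
case: (ltngtP (s (e i)) (s (e j))) => [/rank_mono //|/rank_mono/ltnW|/val_inj].
  by rewrite leqNgt => /negbTE.
by move/perm_inj/e_inj => ->; rewrite ltnn.
Qed.

Lemma restr_rank_inj s : injective (fun i => Ordinal (restr_rank_lt s i)).
Proof.
move=> i j [] eq_ij; apply/eqP; apply/negPn/negP => ne_ij.
case: (ltngtP (s (e i)) (s (e j))) => [|| /val_inj/perm_inj/e_inj eq_e].
- by rewrite -restr_rank_ltE eq_ij ltnn.
- by rewrite -restr_rank_ltE eq_ij ltnn.
- by rewrite eq_e eqxx in ne_ij.
Qed.

Definition restr_perm (s : 'S_k) : 'S_m := perm (@restr_rank_inj s).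

Lemma restr_perm_above s i j : above (restr_perm s) i j = above s (e i) (e j).
Proof. by rewrite /above /restr_perm !permE /= restr_rank_ltE. Qed.

Definition ext_fun (u : 'S_m) (y : 'I_k) : 'I_k :=
  if [pick i | e i == y] is Some i then e (u i) else y.

Lemma ext_fun_e u i : ext_fun u (e i) = e (u i).
Proof.
rewrite /ext_fun; case: pickP => [i' /eqP /e_inj -> //|none].
by move: (none i); rewrite eqxx.
Qed.

Lemma ext_fun_inj u : injective (ext_fun u).
Proof.
move=> y1 y2; rewrite /ext_fun.
case: pickP => [i1 /eqP <-|n1]; case: pickP => [i2 /eqP <-|n2] //.
- by move/e_inj/perm_inj => ->.
- by move=> eq_y; move: (n2 (u i1)); rewrite eq_y eqxx.
- by move=> eq_y; move: (n1 (u i2)); rewrite -eq_y eqxx.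
Qed.

Definition ext_perm (u : 'S_m) : 'S_k := perm (@ext_fun_inj u).

Lemma restr_perm_ext u s : restr_perm (ext_perm u * s)%g = (u * restr_perm s)%g.
Proof.
apply/permP => i; apply: val_inj; rewrite permM /restr_perm !permE /= /restr_rank.
rewrite -[RHS](card_preimset _ (@perm_inj _ u)).
by apply: eq_card => j; rewrite !inE !permM !permE !ext_fun_e.
Qed.

Definition restr_fiber (t : 'S_m) : {set 'S_k} := [set s | restr_perm s == t].

(* All fibres are equinumerous: they are translates of each other. *)
Lemma card_restr_fiber t : #|restr_fiber t| = #|restr_fiber 1%g|.
Proof.
rewrite -(card_preimset _ (mulgI (ext_perm t))).
apply: eq_card => s; rewrite !inE restr_perm_ext.
by apply/eqP/eqP => [eq_t | ->]; [apply: (mulgI t); rewrite eq_t |]; rewrite mulg1.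
Qed.

Lemma fact_restr_fiber : k`! = m`! * #|restr_fiber 1%g|.
Proof.
have : #|{perm 'I_k}| = \sum_(t : 'S_m) #|restr_fiber t|.
  rewrite -sum1_card (partition_big restr_perm predT) //.
  by apply: eq_bigr => t _; rewrite sum1dep_card.
rewrite (eq_bigr _ (fun t _ => card_restr_fiber t)) sum_nat_const.
by rewrite !card_Sn.
Qed.

Variable n : nat.

Definition restr_profile (x : profile n k) : profile n m :=
  [ffun i => restr_perm (x i)].

Lemma pairvec_restr x a b : pairvec (restr_profile x) a b = pairvec x (e a) (e b).
Proof. by apply/ffunP => i; rewrite !ffunE restr_perm_above. Qed.

Lemma card_restr_profile_fiber (y : profile n m) :
  #|[set x | restr_profile x == y]| = #|restr_fiber 1%g| ^ n.
Proof.
transitivity #|family (fun i => [pred s | restr_perm s == y i])|.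
  apply: eq_card => x; rewrite inE; apply/eqP/familyP => [<- i | fam_x].
    by rewrite inE ffunE.
  by apply/ffunP => i; rewrite ffunE; apply/eqP; apply: fam_x.
rewrite card_family foldrE big_map big_enum /=.
rewrite (eq_bigr (fun _ => #|restr_fiber 1%g|)) ?prod_nat_const ?card_ord //.
by move=> i _; rewrite -(card_restr_fiber (y i)); apply: eq_card => s; rewrite !inE.
Qed.

Lemma card_restr_preim (P : pred (profile n m)) :
  #|[set x | P (restr_profile x)]| * m`! ^ n = #|[set y | P y]| * k`! ^ n.
Proof.
have -> : #|[set x | P (restr_profile x)]| =
          \sum_(y | P y) #|[set x | restr_profile x == y]|.
  rewrite -sum1_card (partition_big restr_profile P) => [|x]; last by rewrite inE.
  apply: eq_bigr => y Py; rewrite -sum1_card; apply: eq_bigl => x.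
  by rewrite !inE; case: eqP => [->|_]; rewrite ?Py ?andbF ?andbT.
under eq_bigr => y _ do rewrite card_restr_profile_fiber.
rewrite sum_nat_cond_const fact_restr_fiber expnMn.
by rewrite -mulnA [X in _ * X]mulnC.
Qed.

End Restriction.

Lemma above_swap k (s : 'S_k) a b : a != b -> above s b a = ~~ above s a b.
Proof.
move=> ne_ab; rewrite /above; case: ltngtP => // /val_inj/perm_inj eq_ab.
by rewrite eq_ab eqxx in ne_ab.
Qed.

Lemma card_profile n k : #|{: profile n k}| = k`! ^ n.
Proof. by rewrite card_ffun card_Sn card_ord. Qed.

(* From now on g is odd, so every G_k is a tournament: between two distinct
   alternatives exactly one beats the other. *)
Section Tournament.
Variables (n : nat) (g : bvec n -> bool).
Hypothesis g_odd : odd_fun g.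

Lemma Gk_swap k (x : profile n k) a b : a != b -> Gk g x b a = ~~ Gk g x a b.
Proof.
move=> ne_ab; rewrite /Gk -g_odd; congr g; apply/ffunP => i.
by rewrite !ffunE above_swap.
Qed.

Lemma GCW_unique k (x : profile n k) a b : is_GCW g x a -> is_GCW g x b -> a = b.
Proof.
move=> /forallP win_a /forallP win_b; apply/eqP/negPn/negP => ne_ab.
move: (win_a b) (win_b a); rewrite ne_ab eq_sym ne_ab /= (Gk_swap x ne_ab).
by case: (Gk g x a b).
Qed.

Lemma is_GCW_relabel k (x : profile n k) a a0 :
  is_GCW g (restr_profile (@perm_inj _ (tperm a0 a)) x) a0 = is_GCW g x a.
Proof.
rewrite /is_GCW /Gk; apply/forallP/forallP => win b.
  apply/implyP => ne_ba; move: (win (tperm a0 a b)) => /implyP.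
  rewrite pairvec_restr tpermK tpermL; apply; apply/eqP => eq_b.
  by move/eqP: ne_ba; apply; rewrite -(tpermK a0 a b) eq_b tpermL.
rewrite pairvec_restr tpermL; apply/implyP => ne_b.
move: (win (tperm a0 a b)) => /implyP; apply; apply/eqP => eq_b.
by move/eqP: ne_b; apply; rewrite -(tpermK a0 a b) eq_b tpermR.
Qed.

(* By uniqueness and symmetry among alternatives, a GCW exists k times as
   often as a given alternative a0 is the GCW. *)
Lemma card_GCW k (a0 : 'I_k) :
  #|[set x : profile n k | [exists a, is_GCW g x a]]| =
  k * #|[set x : profile n k | is_GCW g x a0]|.
Proof.
rewrite card_exists_unique; last by move=> x a b; apply: GCW_unique.
rewrite -[k in k * _]card_ord -sum_nat_const; apply: eq_bigr => a _.
have fact_pos : 0 < k`! ^ n by rewrite expn_gt0 fact_gt0.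
apply/eqP; rewrite -(eqn_pmul2r fact_pos).
rewrite -(card_restr_preim (@perm_inj _ (tperm a0 a)) (fun y => is_GCW g y a0)).
by apply/eqP; congr (_ * _); apply: eq_card => x; rewrite !inE is_GCW_relabel.
Qed.

Definition deg k (x : profile n k.+1) : nat :=
  #|[pred b | (b != ord0) && Gk g x ord0 b]|.

Lemma deg_le k (x : profile n k.+1) : deg x <= k.
Proof.
apply: (@leq_trans #|predC1 (ord0 : 'I_k.+1)|); last by rewrite cardC1 card_ord.
by apply: subset_leq_card; apply/subsetP => b; rewrite !inE => /andP [].
Qed.

Definition ext_ord0 k j (f : {ffun 'I_j -> 'I_k.+1}) (i : 'I_j.+1) : 'I_k.+1 :=
  if unlift ord0 i is Some i' then f i' else ord0.

Lemma ext_ord0_inj k j (f : {ffun 'I_j -> 'I_k.+1}) :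
  injectiveb f -> f \in ffun_on (predC1 ord0) -> injective (ext_ord0 f).
Proof.
move=> /injectiveP f_inj /ffun_onP f_ne0 i1 i2; rewrite /ext_ord0.
case: (unliftP ord0 i1) => [j1 ->|->]; case: (unliftP ord0 i2) => [j2 ->|->] //.
- by move/f_inj => ->.
- by move=> eq_f; move: (f_ne0 j1); rewrite inE eq_f eqxx.
- by move=> eq_f; move: (f_ne0 j2); rewrite inE -eq_f eqxx.
Qed.

Lemma is_GCW_ext_ord0 k j (f : {ffun 'I_j -> 'I_k.+1}) (f_inj : injectiveb f)
    (f_ne0 : f \in ffun_on (predC1 ord0)) (x : profile n k.+1) :
  is_GCW g (restr_profile (ext_ord0_inj f_inj f_ne0) x) ord0 =
  [forall i, Gk g x ord0 (f i)].
Proof.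
rewrite /is_GCW /Gk; apply/forallP/forallP => win b.
  move: (win (lift ord0 b)); rewrite pairvec_restr /ext_ord0 liftK unlift_none.
  by rewrite eq_sym neq_lift.
apply/implyP => ne_b0; rewrite pairvec_restr /ext_ord0 unlift_none.
by rewrite eq_sym in ne_b0; case: (unlift_some ne_b0) => i _ ->.
Qed.

(* Falling moments of the degree: the sum of deg^_j counts the pairs (x, f)
   with f an injective j-tuple of alternatives beaten by 0; for each of the
   k^_j admissible f, marginalisation to j.+1 alternatives gives the count of
   profiles on j.+1 alternatives won by 0. *)
Lemma sum_ffact_deg k j :
  (\sum_(x : profile n k.+1) (deg x) ^_ j) * j.+1`! ^ n =
  k ^_ j * #|[set y : profile n j.+1 | is_GCW g y ord0]| * k.+1`! ^ n.
Proof.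
pose beaten (x : profile n k.+1) (f : {ffun 'I_j -> 'I_k.+1}) :=
  (f \in ffun_on [pred b | (b != ord0) && Gk g x ord0 b]) && injectiveb f.
pose admissible (f : {ffun 'I_j -> 'I_k.+1}) :=
  (f \in ffun_on (predC1 ord0)) && injectiveb f.
have -> : \sum_(x : profile n k.+1) (deg x) ^_ j = \sum_x #|[set f | beaten x f]|.
  apply: eq_bigr => x _; rewrite /deg -[j in _ ^_ j]card_ord -card_inj_ffuns_on.
  by apply: eq_card => f; rewrite !inE.
rewrite double_count (bigID admissible) /= [X in _ + X]big1 ?addn0; last first.
  move=> f not_adm; apply/eqP; rewrite cards_eq0; apply/eqP/setP => x; rewrite !inE.
  apply/negP => /andP [/ffun_onP f_beaten f_inj]; case/negP: not_adm.
  rewrite /admissible f_inj andbT; apply/ffun_onP => i.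
  by move: (f_beaten i); rewrite !inE => /andP [].
rewrite big_distrl /=.
rewrite (eq_bigr (fun _ => #|[set y : profile n j.+1 | is_GCW g y ord0]| * k.+1`! ^ n));
  last first.
  move=> f /andP [f_ne0 f_inj].
  rewrite -(card_restr_preim (ext_ord0_inj f_inj f_ne0) (fun y => is_GCW g y ord0)).
  congr (_ * _); apply: eq_card => x; rewrite !inE is_GCW_ext_ord0 /beaten f_inj andbT.
  apply/ffun_onP/forallP => beaten_x i.
    by move: (beaten_x i); rewrite inE => /andP [].
  by rewrite inE beaten_x andbT; move/ffun_onP: f_ne0 => /(_ i); rewrite inE.
rewrite sum_nat_cond_const mulnA; congr (_ * _ * _).
by rewrite card_inj_ffuns_on cardC1 !card_ord.
Qed.

Definition rev_perm k : 'S_k := perm (@rev_ord_inj k).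

Definition rev_profile k (x : profile n k) : profile n k :=
  [ffun i => (x i * rev_perm k)%g].

Lemma rev_profileK k : involutive (@rev_profile k).
Proof.
move=> x; apply/ffunP => i; rewrite !ffunE; apply/permP => a.
by rewrite !permM !permE rev_ordK.
Qed.

Lemma pairvec_rev k (x : profile n k) a b :
  pairvec (rev_profile x) a b = pairvec x b a.
Proof.
apply/ffunP => i; rewrite !ffunE /above !permM !permE /=.
by have := ltn_ord (x i a); have := ltn_ord (x i b); lia.
Qed.

(* By oddness, reversal turns the degree d of 0 into k - d. *)
Lemma deg_rev k (x : profile n k.+1) : deg (rev_profile x) = k - deg x.
Proof.
have := cardID [pred b | Gk g x ord0 b] (predC1 (ord0 : 'I_k.+1)).
rewrite cardC1 card_ord /=.
have -> : #|[predI predC1 ord0 & [pred b | Gk g x ord0 b]]| = deg x.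
  by apply: eq_card => b; rewrite !inE.
have -> : #|[predD predC1 ord0 & [pred b | Gk g x ord0 b]]| = deg (rev_profile x).
  apply: eq_card => b; rewrite !inE /Gk pairvec_rev andbC.
  case: (altP (b =P ord0)) => [//|ne_b0].
  by rewrite /= -/(Gk g x ord0 b) (Gk_swap x ne_b0) negbK.
lia.
Qed.

(* Since reversal is a bijection on profiles, deg and k - deg are equally
   distributed; so F(deg) and G(deg) have the same sum as soon as F and G
   agree after symmetrisation d |-> F d + F (k - d) on 0..k. *)
Lemma sum_deg_symmetric k (F G : nat -> nat) :
    (forall d, d <= k -> F d + F (k - d) = G d + G (k - d)) ->
  \sum_(x : profile n k.+1) F (deg x) = \sum_(x : profile n k.+1) G (deg x).
Proof.
move=> FG_sym.
have sum_rev (H : nat -> nat) :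
    \sum_(x : profile n k.+1) H (k - deg x) = \sum_(x : profile n k.+1) H (deg x).
  rewrite [RHS](reindex_inj (inv_inj (@rev_profileK k.+1))) /=.
  by apply: eq_bigr => x _; rewrite deg_rev.
have : \sum_(x : profile n k.+1) (F (deg x) + F (k - deg x)) =
       \sum_(x : profile n k.+1) (G (deg x) + G (k - deg x)).
  by apply: eq_bigr => x _; apply/FG_sym/deg_le.
rewrite !big_split /= !sum_rev !addnn; exact: double_inj.
Qed.

End Tournament.

Definition ffact_poly (c : seq nat) (d : nat) : nat :=
  \sum_(0 <= j < size c) nth 0 c j * d ^_ j.

Lemma ffact_identity3 d : d <= 3 ->
  ffact_poly [:: 6; 0; 0; 4] d + ffact_poly [:: 6; 0; 0; 4] (3 - d) =
   ffact_poly [:: 0; 0; 6] d + ffact_poly [:: 0; 0; 6] (3 - d).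
Proof.
by rewrite /ffact_poly /= !big_nat_recl // !big_geq // ffactE; case: d => [|[|[|[|d]]]].
Qed.

Lemma ffact_identity5 d : d <= 5 ->
  ffact_poly [:: 240; 0; 0; 0; 10] d + ffact_poly [:: 240; 0; 0; 0; 10] (5 - d) =
   ffact_poly [:: 0; 0; 60; 0; 0; 4] d + ffact_poly [:: 0; 0; 60; 0; 0; 4] (5 - d).
Proof.
rewrite /ffact_poly /= !big_nat_recl // !big_geq // ffactE.
by case: d => [|[|[|[|[|[|d]]]]]].
Qed.

Import GRing.Theory Num.Theory.
Local Open Scope ring_scope.

Section Moments.
Variables (n : nat) (g : bvec n -> bool).
Hypothesis g_odd : odd_fun g.

Definition win_prob j : rat :=
  #|[set x : profile n j.+1 | is_GCW g x ord0]|%:R / (j.+1`! ^ n)%:R.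

Lemma card_profile_neq0 k : (k`! ^ n)%:R != 0 :> rat.
Proof. by rewrite pnatr_eq0 -lt0n expn_gt0 fact_gt0. Qed.

Lemma GCW_win_prob k : GCW k.+1 g = k.+1%:R * win_prob k.
Proof. by rewrite /GCW card_profile (card_GCW g_odd ord0) natrM mulrA. Qed.

Lemma win_prob0 : win_prob 0 = 1.
Proof.
have all_win : [set x : profile n 1 | is_GCW g x ord0] = setT.
  by apply/setP => x; rewrite !inE; apply/forallP => b; rewrite [b]ord1 eqxx.
by rewrite /win_prob all_win cardsT card_profile divff ?card_profile_neq0.
Qed.

Lemma mean_ffact_deg k j :
  (\sum_(x : profile n k.+1) (deg g x) ^_ j)%:R / (k.+1`! ^ n)%:R =
  (k ^_ j)%:R * win_prob j.
Proof.
rewrite /win_prob mulrA; apply/eqP.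
rewrite eqr_div ?card_profile_neq0 // -!natrM; apply/eqP; congr _%:R.
exact: sum_ffact_deg.
Qed.

Lemma mean_ffact_poly k (c : seq nat) :
  (\sum_(x : profile n k.+1) ffact_poly c (deg g x))%:R / (k.+1`! ^ n)%:R =
  \sum_(0 <= j < size c) (nth 0 c j * k ^_ j)%:R * win_prob j.
Proof.
rewrite /ffact_poly exchange_big natr_sum mulr_suml; apply: eq_bigr => j _.
by rewrite -big_distrr !natrM -!mulrA mean_ffact_deg.
Qed.

Lemma ffact_moment_relation k (c1 c2 : seq nat) :
    (forall d, (d <= k)%N -> (ffact_poly c1 d + ffact_poly c1 (k - d) =
                              ffact_poly c2 d + ffact_poly c2 (k - d))%N) ->
  \sum_(0 <= j < size c1) (nth 0 c1 j * k ^_ j)%:R * win_prob j =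
  \sum_(0 <= j < size c2) (nth 0 c2 j * k ^_ j)%:R * win_prob j.
Proof.
by move=> sym; rewrite -!mean_ffact_poly (sum_deg_symmetric g_odd sym).
Qed.

End Moments.

Theorem mainTheorem9 (n : nat) (g : bvec n -> bool) (hg : odd_fun g) :
  GCW 4 g = 2 * GCW 3 g - 1 /\
  GCW 5 g = GCW 6 g / 3 + 5 * GCW 3 g / 3 - 1.
Proof.
have four_alternatives := ffact_moment_relation hg ffact_identity3.
have six_alternatives := ffact_moment_relation hg ffact_identity5.
rewrite unlock /= ffactE /= (win_prob0 g) in four_alternatives six_alternatives.
rewrite !(GCW_win_prob hg); split; lra.
Qed.
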